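(* Let $G=(V,E)$ be a neutral graph and let $G^{\ominus}$ be the graph with vertex set $V\cup V^{\circ}$, where $V^{\circ}=\{u^{\circ}:u\in V\}$ is a disjoint copy of $V$, and edge set consisting of, for each edge $uv\in E$, the four edges $uv$, $u^{\circ}v^{\circ}$, $uv^{\circ}$ and $u^{\circ}v$. Then $G^{\ominus}$ has the same assortativity coefficient as $G$, i.e. $r(G^{\ominus})=r(G)$.
   Context: All graphs are finite, simple and connected. (Equivalently, $G^{\ominus}$ is obtained from $G$ and a copy $G^{\circ}$ by additionally joining each vertex $u$ of $G$ to all neighbours of its copy $u^{\circ}$ in $G^{\circ}$.) For a graph $G=(V,E)$ with $m=|E|\geq1$ and degrees $d_u$, the assortativity coefficient is $$r(G)=\frac{m^{-1}\sum_{e_{uv}\in E} d_{u}d_{v}-\Big[m^{-1}\sum_{e_{uv}\in E} \tfrac{1}{2}(d_{u}+d_{v})\Big]^{2}}{m^{-1}\sum_{e_{uv}\in E} \tfrac{1}{2}(d^{2}_{u}+d^{2}_{v})-\Big[m^{-1}\sum_{e_{uv}\in E} \tfrac{1}{2}(d_{u}+d_{v})\Big]^{2}},$$ sums over edges counting each edge once, defined whenever the denominator is nonzero; $G$ is neutral if $r(G)$ is defined and equals $0$. *)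

From mathcomp Require Import all_boot all_order all_algebra.
Set Implicit Arguments. Unset Strict Implicit. Unset Printing Implicit Defensive.
Import Order.TTheory GRing.Theory Num.Theory.
Local Open Scope ring_scope.

Definition simple_graph (T : finType) (e : rel T) : Prop :=
  symmetric e /\ irreflexive e.

Definition connected_graph (T : finType) (e : rel T) : Prop :=
  forall u v : T, connect e u v.

Definition deg (T : finType) (e : rel T) (u : T) : nat := #|[set v | e u v]|.

(* Sum of a quantity f u v, symmetric in u v, over the edge set, counting
   each (unordered) edge once: it is half the sum over ordered adjacent pairs. *)
Definition edge_sum (R : realFieldType) (T : finType) (e : rel T)
  (f : T -> T -> R) : R :=
  (\sum_(u : T) \sum_(v : T | e u v) f u v) / 2.

Definition nedges (R : realFieldType) (T : finType) (e : rel T) : R :=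
  edge_sum e (fun _ _ => 1).

Definition dR (R : realFieldType) (T : finType) (e : rel T) (u : T) : R :=
  (deg e u)%:R.

Definition assort_mean (R : realFieldType) (T : finType) (e : rel T) : R :=
  (nedges R e)^-1 * edge_sum e (fun u v => (dR R e u + dR R e v) / 2).

Definition assort_num (R : realFieldType) (T : finType) (e : rel T) : R :=
  (nedges R e)^-1 * edge_sum e (fun u v => dR R e u * dR R e v)
  - (assort_mean R e) ^+ 2.

Definition assort_den (R : realFieldType) (T : finType) (e : rel T) : R :=
  (nedges R e)^-1 * edge_sum e (fun u v => (dR R e u ^+ 2 + dR R e v ^+ 2) / 2)
  - (assort_mean R e) ^+ 2.

Definition assort_defined (R : realFieldType) (T : finType) (e : rel T) : Prop :=
  (0 < nedges R e) /\ assort_den R e != 0.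

Definition assort (R : realFieldType) (T : finType) (e : rel T) : R :=
  assort_num R e / assort_den R e.

Definition neutral (R : realFieldType) (T : finType) (e : rel T) : Prop :=
  assort_defined R e /\ assort R e = 0.

(* The graph G^⊖ on V ⊔ V° (vertex type T + T, inl u = u, inr u = u°):
   x ~ y iff their underlying vertices of G are adjacent, i.e. for each
   edge uv of G the four edges uv, u°v°, uv°, u°v. *)
Definition proj_copy (T : finType) (x : T + T) : T :=
  match x with inl u => u | inr u => u end.

Definition ominus (T : finType) (e : rel T) : rel (T + T)%type :=
  fun x y => e (proj_copy x) (proj_copy y).

From mathcomp Require Import all_boot all_order all_algebra.
From mathcomp Require Import ring.
Import Order.TTheory GRing.Theory Num.Theory.
Local Open Scope ring_scope.

(* Every vertex of G^⊖ has twice the degree of the vertex of G it copies, and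
   every edge of G yields four edges of G^⊖.  Hence the edge averages defining
   r scale as follows: the mean degree by 2, the numerator and the denominator
   by 4 (they are quadratic in the degrees), so their ratio is unchanged. *)

Section EdgeSum.

Variables (R : realFieldType) (T : finType) (e : rel T).

Lemma eq_edge_sum (f g : T -> T -> R) :
  (forall u v, f u v = g u v) -> edge_sum e f = edge_sum e g.
Proof.
by move=> fg; rewrite /edge_sum; under eq_bigr do under eq_bigr do rewrite fg.
Qed.

Lemma edge_sumZ (c : R) (f : T -> T -> R) :
  edge_sum e (fun u v => c * f u v) = c * edge_sum e f.
Proof.
rewrite /edge_sum mulrA mulr_sumr; congr (_ / _).
by apply: eq_bigr => u _; rewrite mulr_sumr.
Qed.

End EdgeSum.

Section Ominus.

Variables (R : realFieldType) (T : finType) (e : rel T).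

Lemma deg_ominus (x : T + T) : deg (ominus e) x = (2 * deg e (proj_copy x))%N.
Proof.
have deg_sum (S : finType) (r : rel S) u : deg r u = (\sum_(v | r u v) 1)%N.
  by rewrite /deg -sum1_card; apply: eq_bigl => v; rewrite inE.
by rewrite !deg_sum big_sumType mul2n -addnn.
Qed.

Lemma dR_ominus (x : T + T) : dR R (ominus e) x = 2 * dR R e (proj_copy x).
Proof. by rewrite /dR deg_ominus natrM. Qed.

Lemma edge_sum_ominus (F : T -> T -> R) :
  edge_sum (ominus e) (fun x y => F (proj_copy x) (proj_copy y))
  = 4 * edge_sum e F.
Proof.
have sum_copies x : \sum_(y | ominus e x y) F (proj_copy x) (proj_copy y)
                    = 2 * \sum_(v | e (proj_copy x) v) F (proj_copy x) v.
  by rewrite big_sumType mulr2n mulrDl mul1r.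
rewrite /edge_sum big_sumType /= (eq_bigr _ (fun u _ => sum_copies (inl u))).
by rewrite -mulr_sumr; ring.
Qed.

Lemma edge_sum_ominus_deg (F : R -> R -> R) :
  edge_sum (ominus e) (fun x y => F (dR R (ominus e) x) (dR R (ominus e) y))
  = 4 * edge_sum e (fun u v => F (2 * dR R e u) (2 * dR R e v)).
Proof.
rewrite -(edge_sum_ominus (fun u v => F (2 * dR R e u) (2 * dR R e v))).
by apply: eq_edge_sum => x y; rewrite !dR_ominus.
Qed.

Lemma nedges_ominus : nedges R (ominus e) = 4 * nedges R e.
Proof. exact: (edge_sum_ominus (fun _ _ => 1)). Qed.

(* The normalisation [m^-1] of G^⊖ cancels the factor 4 of its edge sums,
   whether or not [m = 0]. *)
Lemma edge_mean_ominus_deg (F : R -> R -> R) :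
  (nedges R (ominus e))^-1 *
    edge_sum (ominus e) (fun x y => F (dR R (ominus e) x) (dR R (ominus e) y))
  = (nedges R e)^-1 * edge_sum e (fun u v => F (2 * dR R e u) (2 * dR R e v)).
Proof.
rewrite nedges_ominus edge_sum_ominus_deg invfM mulrACA mulVf ?mul1r //.
by rewrite pnatr_eq0.
Qed.

Lemma assort_mean_ominus : assort_mean R (ominus e) = 2 * assort_mean R e.
Proof.
rewrite /assort_mean (edge_mean_ominus_deg (fun a b => (a + b) / 2)).
rewrite (@eq_edge_sum _ _ _ _ (fun u v => 2 * ((dR R e u + dR R e v) / 2))).
  by rewrite edge_sumZ mulrCA.
by move=> u v; ring.
Qed.

Lemma assort_num_ominus : assort_num R (ominus e) = 4 * assort_num R e.
Proof.
rewrite /assort_num assort_mean_ominus (edge_mean_ominus_deg (fun a b => a * b)).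
rewrite (@eq_edge_sum _ _ _ _ (fun u v => 4 * (dR R e u * dR R e v))).
  by rewrite edge_sumZ; ring.
by move=> u v; ring.
Qed.

Lemma assort_den_ominus : assort_den R (ominus e) = 4 * assort_den R e.
Proof.
rewrite /assort_den assort_mean_ominus.
rewrite (edge_mean_ominus_deg (fun a b => (a ^+ 2 + b ^+ 2) / 2)).
rewrite (@eq_edge_sum _ _ _ _
          (fun u v => 4 * ((dR R e u ^+ 2 + dR R e v ^+ 2) / 2))).
  by rewrite edge_sumZ; ring.
by move=> u v; ring.
Qed.

Lemma assort_ominus : assort R (ominus e) = assort R e.
Proof.
rewrite /assort assort_num_ominus assort_den_ominus invfM mulrACA mulfV ?mul1r //.
by rewrite pnatr_eq0.
Qed.

Lemma assort_defined_ominus :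
  assort_defined R e -> assort_defined R (ominus e).
Proof.
move=> [m_gt0 den_neq0]; split.
  by rewrite nedges_ominus mulr_gt0.
by rewrite assort_den_ominus mulf_neq0 ?pnatr_eq0.
Qed.

End Ominus.

Theorem mainTheorem13 (R : realFieldType) (T : finType) (e : rel T) :
  simple_graph e -> connected_graph e -> neutral R e ->
  assort_defined R (ominus e) /\ assort R (ominus e) = assort R e.
Proof.
move=> _ _ [defined _]; split; first exact: assort_defined_ominus.
exact: assort_ominus.
Qed.
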